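(* Let $A$ be an associative algebra, $M$ an $A$-bimodule, and let $\{ T_\alpha : M \to A \}_{\alpha \in \Omega}$ and $\{ S_\alpha : M \to A \}_{\alpha \in \Omega}$ be two compatible $\mathcal{O}$-operator families. If the family $\{S_\alpha\}$ is invertible (each $S_\alpha$ is a linear isomorphism), then $\{ N_\alpha = T_{\alpha} \circ S_{\alpha}^{-1} : A \to A \}_{\alpha \in \Omega}$ is a Nijenhuis family on $A$. Likewise, if $\{T_\alpha\}$ is invertible, then $\{ N_\alpha = S_{\alpha} \circ T_{\alpha}^{-1} \}_{\alpha \in \Omega}$ is a Nijenhuis family on $A$.
   Context: $\Omega$ is a semigroup, $\mathbf{k}$ a field of characteristic $0$. An $\mathcal{O}$-operator family is a collection of linear maps $T_\alpha:M\to A$ with $T_\alpha(u) \cdot T_\beta(v) = T_{\alpha\beta}(T_\alpha(u) \cdot v + u \cdot T_\beta(v))$ for all $u,v\in M$, $\alpha,\beta\in\Omega$. Two $\mathcal{O}$-operator families $\{T_\alpha\},\{S_\alpha\}$ are compatible if $\{\lambda T_\alpha+\eta S_\alpha\}_{\alpha}$ is an $\mathcal{O}$-operator family for all $\lambda,\eta\in\mathbf{k}$. A Nijenhuis family is a collection of linear maps $N_\alpha:A\to A$ with $N_\alpha(a) \cdot N_\beta(b) = N_{\alpha \beta} \big( N_\alpha (a) \cdot b + a \cdot N_\beta(b) - N_{\alpha \beta}(a \cdot b) \big)$. *)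

From HB Require Import structures.
From mathcomp Require Import all_boot all_order all_algebra.
Set Implicit Arguments. Unset Strict Implicit. Unset Printing Implicit Defensive.
Import GRing.Theory.
Local Open Scope ring_scope.

Definition is_assoc_algebra (k : fieldType) (A : lmodType k)
    (mulA : A -> A -> A) : Prop :=
  (forall a : A, linear (mulA a)) /\
  (forall b : A, linear (fun a => mulA a b)) /\
  (forall a b c : A, mulA (mulA a b) c = mulA a (mulA b c)).

Definition is_bimodule (k : fieldType) (A M : lmodType k)
    (mulA : A -> A -> A) (lact : A -> M -> M) (ract : M -> A -> M) : Prop :=
  (forall a : A, linear (lact a)) /\
  (forall m : M, linear (fun a => lact a m)) /\
  (forall m : M, linear (ract m)) /\
  (forall a : A, linear (fun m => ract m a)) /\
  (forall (a b : A) (m : M), lact (mulA a b) m = lact a (lact b m)) /\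
  (forall (a b : A) (m : M), ract m (mulA a b) = ract (ract m a) b) /\
  (forall (a b : A) (m : M), ract (lact a m) b = lact a (ract m b)).

Definition is_semigroup (Omega : Type) (op : Omega -> Omega -> Omega) : Prop :=
  forall x y z, op (op x y) z = op x (op y z).

Definition O_operator_family (k : fieldType) (A M : lmodType k) (Omega : Type)
    (op : Omega -> Omega -> Omega) (mulA : A -> A -> A)
    (lact : A -> M -> M) (ract : M -> A -> M) (T : Omega -> M -> A) : Prop :=
  (forall al, linear (T al)) /\
  (forall (u v : M) (al be : Omega),
     mulA (T al u) (T be v) = T (op al be) (lact (T al u) v + ract u (T be v))).

Definition compatible_O_operator_families (k : fieldType) (A M : lmodType k)
    (Omega : Type) (op : Omega -> Omega -> Omega) (mulA : A -> A -> A)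
    (lact : A -> M -> M) (ract : M -> A -> M) (T S : Omega -> M -> A) : Prop :=
  forall lam eta : k,
    O_operator_family op mulA lact ract (fun al u => lam *: T al u + eta *: S al u).

Definition Nijenhuis_family (k : fieldType) (A : lmodType k) (Omega : Type)
    (op : Omega -> Omega -> Omega) (mulA : A -> A -> A) (N : Omega -> A -> A) : Prop :=
  (forall al, linear (N al)) /\
  (forall (a b : A) (al be : Omega),
     mulA (N al a) (N be b) =
     N (op al be) (mulA (N al a) b + mulA a (N be b) - N (op al be) (mulA a b))).

From mathcomp Require Import all_boot all_order all_algebra.
Set Implicit Arguments. Unset Strict Implicit. Unset Printing Implicit Defensive.
Import GRing.Theory.
Local Open Scope ring_scope.

(* Write a = S_al u and b = S_be v.  Compatibility (at lam = eta = 1), after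
   cancelling the O-operator identities of T and S, gives the cross identity
     T_al u * S_be v + S_al u * T_be v
       = T_(al be) (S_al u . v + u . S_be v) + S_(al be) (T_al u . v + u . T_be v).
   Since N_(al be) (a b) = T_(al be) (S_al u . v + u . S_be v) by the identity
   for S, the argument of N_(al be) in the Nijenhuis identity collapses to
   S_(al be) (T_al u . v + u . T_be v), whose image under N_(al be) is
   T_(al be) (T_al u . v + u . T_be v) = N_al a * N_be b. *)

Lemma linear_addr (k : fieldType) (U V : lmodType k) (f : U -> V) :
  linear f -> {morph f : x y / x + y}.
Proof. by move=> f_lin x y; rewrite -(scale1r x) f_lin !scale1r. Qed.

Lemma can2_linear_fun (k : fieldType) (U V : lmodType k) (f : U -> V) (g : V -> U) :
  linear f -> cancel f g -> cancel g f -> linear g.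
Proof. by move=> f_lin fK gK a x y; apply: (can_inj fK); rewrite f_lin !gK. Qed.

Section CompatibleOOperatorFamilies.

Variables (k : fieldType) (Omega : Type) (op : Omega -> Omega -> Omega).
Variables (A M : lmodType k) (mulA : A -> A -> A).
Variables (lact : A -> M -> M) (ract : M -> A -> M).

Definition O_operator_cross (T S : Omega -> M -> A) : Prop :=
  forall (u v : M) (al be : Omega),
    mulA (T al u) (S be v) + mulA (S al u) (T be v) =
    T (op al be) (lact (S al u) v + ract u (S be v)) +
    S (op al be) (lact (T al u) v + ract u (T be v)).

Lemma O_operator_crossC (T S : Omega -> M -> A) :
  O_operator_cross T S -> O_operator_cross S T.
Proof. by move=> TS u v al be; rewrite addrC TS addrC. Qed.

Lemma compatible_O_operator_cross (T S : Omega -> M -> A) :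
  (forall a, {morph mulA a : x y / x + y}) ->
  (forall b, {morph mulA^~ b : x y / x + y}) ->
  (forall m, {morph lact^~ m : x y / x + y}) ->
  (forall m, {morph ract m : x y / x + y}) ->
  O_operator_family op mulA lact ract T ->
  O_operator_family op mulA lact ract S ->
  compatible_O_operator_families op mulA lact ract T S ->
  O_operator_cross T S.
Proof.
move=> mulA_addr mulA_addl lact_addl ract_addr [T_lin T_O] [S_lin S_O] TS u v al be.
have := (TS 1 1).2 u v al be; rewrite !scale1r.
have -> : lact (T al u + S al u) v + ract u (T be v + S be v) =
    (lact (T al u) v + ract u (T be v)) + (lact (S al u) v + ract u (S be v)).
  by rewrite lact_addl ract_addr addrACA.
rewrite mulA_addr !mulA_addl (linear_addr (T_lin _)) (linear_addr (S_lin _)).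
rewrite -T_O -S_O => sum_eq; rewrite addrC.
apply: (addrI (mulA (T al u) (T be v))); apply: (addIr (mulA (S al u) (S be v))).
by rewrite !addrA; rewrite !addrA in sum_eq.
Qed.

Lemma Nijenhuis_family_comp_inv (T S : Omega -> M -> A) (Sinv : Omega -> A -> M) :
  O_operator_family op mulA lact ract T ->
  O_operator_family op mulA lact ract S ->
  O_operator_cross T S ->
  (forall al, cancel (S al) (Sinv al) /\ cancel (Sinv al) (S al)) ->
  Nijenhuis_family op mulA (fun al => T al \o Sinv al).
Proof.
move=> [T_lin T_O] [S_lin S_O] TS Sinv_can; split.
  move=> al c x y /=; have [SK SinvK] := Sinv_can al.
  by rewrite (can2_linear_fun (S_lin al) SK SinvK) T_lin.
move=> a b al be /=.
have [SaK SinvaK] := Sinv_can al; have [SbK SinvbK] := Sinv_can be.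
have [SabK _] := Sinv_can (op al be).
rewrite -(SinvaK a) -(SinvbK b) SaK SbK.
move: (Sinv al a) (Sinv be b) => u v.
by rewrite S_O SabK TS [T _ _ + _]addrC addrK SabK T_O.
Qed.

End CompatibleOOperatorFamilies.

Theorem proposition2p10 (k : fieldType) (Omega : Type)
    (op : Omega -> Omega -> Omega) (A M : lmodType k)
    (mulA : A -> A -> A) (lact : A -> M -> M) (ract : M -> A -> M)
    (T S : Omega -> M -> A) :
  [pchar k] =i pred0 ->
  is_semigroup op ->
  is_assoc_algebra mulA ->
  is_bimodule mulA lact ract ->
  O_operator_family op mulA lact ract T ->
  O_operator_family op mulA lact ract S ->
  compatible_O_operator_families op mulA lact ract T S ->
  (forall Sinv : Omega -> A -> M,
     (forall al, cancel (S al) (Sinv al) /\ cancel (Sinv al) (S al)) ->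
     Nijenhuis_family op mulA (fun al => T al \o Sinv al)) /\
  (forall Tinv : Omega -> A -> M,
     (forall al, cancel (T al) (Tinv al) /\ cancel (Tinv al) (T al)) ->
     Nijenhuis_family op mulA (fun al => S al \o Tinv al)).
Proof.
move=> _ _ [mulA_lin [mulA_linl _]] [_ [lact_linl [ract_lin _]]] T_O S_O TS.
have cross : O_operator_cross op mulA lact ract T S.
  apply: compatible_O_operator_cross T_O S_O TS => x;
    exact: linear_addr.
split=> inv inv_can.
  exact: Nijenhuis_family_comp_inv T_O S_O cross inv_can.
exact: Nijenhuis_family_comp_inv S_O T_O (O_operator_crossC cross) inv_can.
Qed.
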